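(* Let $X$ be a finite group with $|X|=n$ and let $S\subseteq X$ be a generating set with $|S|=d$ and $S^{-1}=S$. Let $G$ be the Cayley graph $(X,S)$, and suppose $G$ is not bipartite. Assume $\beta(G)<\tfrac{1}{16d}$. Then $$h(G)\leq \frac{100\,\beta(G)}{1-16d\,\beta(G)}.$$
   Context: The Cayley graph $(X,S)$ has vertex set $X$ and edges $g\sim gs$ for all $g\in X$, $s\in S$; it is $d$-regular. For $A,B\subseteq X$, $e(A,B)$ is the number of ordered pairs $(a,b)\in A\times B$ with $a\sim b$. For $A\subseteq X$, $\partial(A)$ is the set of edges with exactly one endpoint in $A$. The edge Cheeger constant is $h(G)=\min\{|\partial(A)|/(d|A|) : A\subseteq X,\ 0<|A|\le n/2\}$. For disjoint $L,R\subseteq X$ with $L\cup R\ne\emptyset$, $b(L,R)=\dfrac{e(L,L)+e(R,R)+|\partial(L\cup R)|}{d\,|L\cup R|}$, and the bipartiteness constant is $\beta(G)=\min_{L,R}b(L,R)$ over all such pairs. *)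

From HB Require Import structures.
From mathcomp Require Import all_boot all_order all_algebra all_fingroup.
Set Implicit Arguments. Unset Strict Implicit. Unset Printing Implicit Defensive.
Import Order.TTheory GRing.Theory Num.Theory.
Local Open Scope ring_scope.

Section Cayley.
Variable gT : finGroupType.
Variable S : {set gT}.

Definition cay_adj (a b : gT) : bool := ((a^-1 * b)%g \in S).

(* unordered edges {g, g s} (a singleton for a loop) *)
Definition cay_edges : {set {set gT}} :=
  [set [set x.1; (x.1 * x.2)%g] | x in setX [set: gT] S].

Definition e_cnt (A B : {set gT}) : nat :=
  #|[set p in setX A B | cay_adj p.1 p.2]|.

Definition cay_boundary (A : {set gT}) : {set {set gT}} :=
  [set E in cay_edges | (#|E :&: A| == 1)%N && (#|E :\: A| == 1)%N].

Variable R : realFieldType.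

Definition d_deg : nat := #|S|.

Definition cheeger_ratio (A : {set gT}) : R :=
  (#|cay_boundary A|)%:R / ((d_deg)%:R * (#|A|)%:R).

Definition cheeger_adm (A : {set gT}) : bool :=
  (0 < #|A|)%N && (2 * #|A| <= #|[set: gT]|)%N.

Definition cheeger_h : R :=
  match [pick A | cheeger_adm A] with
  | Some A0 => \big[Num.min/ cheeger_ratio A0]_(A | cheeger_adm A) cheeger_ratio A
  | None => 0
  end.

Definition bip_ratio (LR : {set gT} * {set gT}) : R :=
  ((e_cnt LR.1 LR.1 + e_cnt LR.2 LR.2 + #|cay_boundary (LR.1 :|: LR.2)|)%N)%:R
  / ((d_deg)%:R * (#|LR.1 :|: LR.2|)%:R).

Definition bip_adm (LR : {set gT} * {set gT}) : bool :=
  [disjoint LR.1 & LR.2] && (LR.1 :|: LR.2 != set0).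

Definition bip_beta : R :=
  match [pick LR | bip_adm LR] with
  | Some LR0 => \big[Num.min/ bip_ratio LR0]_(LR | bip_adm LR) bip_ratio LR
  | None => 0
  end.

Definition cay_bipartite : Prop :=
  exists L : {set gT}, forall a b : gT, cay_adj a b -> (a \in L) != (b \in L).

End Cayley.

(* Colour L and R by the two elements of Z/2 and leave the rest of the group
   uncoloured; the numerator N = e(L,L) + e(R,R) + |∂(L ∪ R)| of b(L,R) counts the
   defective edges of this partial 2-colouring.  For x in X and e in Z/2 let W_e(x)
   be the set of coloured g such that x^-1 g is coloured with the colour of g
   shifted by e.  A boundary edge of W_e(x) is defective for the colouring or for
   its x-translate, so |∂W_e(x)| <= 2N.  If L ∪ R or some W_e(x) splits X into two
   parts of size > |L ∪ R|/50, the smaller part has edge expansion at most 100 β.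
   Otherwise, with t = |L ∪ R|/50, every W_e(x) has at most t or at least n - t
   elements, and the e for which W_e(x) is large defines a homomorphism X -> Z/2.
   As the graph is not bipartite, some generator s lies in its kernel.  Each h in
   the kernel moves the colouring at no more than t points, and averaging over the
   kernel shows that g and gs carry the same colour for all but 2t elements g:
   at least n - 2t arcs (g, gs) are defective, contradicting 16 N < |L ∪ R|. *)

From HB Require Import structures.
From mathcomp Require Import all_boot all_order all_algebra all_fingroup.
From mathcomp Require Import zify ring.
Import Order.TTheory GRing.Theory Num.Theory.
Set Implicit Arguments. Unset Strict Implicit. Unset Printing Implicit Defensive.

Lemma pair_straddle (T : finType) (A : {set T}) (a b : T) :
  (#|[set a; b] :&: A| == 1)%N && (#|[set a; b] :\: A| == 1)%N = ((a \in A) != (b \in A)).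
Proof.
wlog aA : a b A / a \in A.
  move=> gen; have /orP[aA|naA] := orbN (a \in A); first exact: gen.
  have := gen a b (~: A); rewrite [_ :\: ~: A]setDE setCK -setDE andbC !inE => -> //.
  by case: (a \in A) naA; case: (b \in A).
case bA: (b \in A); rewrite aA /=.
  suff /eqP -> : [set a; b] :\: A == set0 by rewrite cards0 andbF.
  by rewrite setD_eq0 subUset !sub1set aA bA.
have -> : [set a; b] :&: A = [set a].
  apply/setP => y; rewrite !inE; case: eqP => [->|_]; rewrite ?aA //.
  by case: eqP => [->|]; rewrite ?bA.
have -> : [set a; b] :\: A = [set b].
  apply/setP => y; rewrite !inE; case: (eqVneq y b) => [->|_]; rewrite ?bA ?orbT //=.
  by rewrite orbF andbC; case: eqP => [->|]; rewrite ?aA.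
by rewrite !cards1.
Qed.

Section CayleyArcs.
Variables (gT : finGroupType) (S : {set gT}).

Lemma cay_adjM x a b : cay_adj S (x * a)%g (x * b)%g = cay_adj S a b.
Proof. by rewrite /cay_adj invMg -mulgA mulKg. Qed.

Definition out_arcs (A : {set gT}) : {set gT * gT} :=
  [set p | [&& cay_adj S p.1 p.2, p.1 \in A & p.2 \notin A]].

Lemma cay_boundaryC A : cay_boundary S (~: A) = cay_boundary S A.
Proof.
apply/setP => E; rewrite !inE [E :\: ~: A]setDE setCK -setDE.
by rewrite [X in _ && X]andbC.
Qed.

Hypothesis S_sym : (S^-1)%g = S.

Lemma cay_boundaryE A :
  cay_boundary S A = [set [set p.1; p.2] | p in out_arcs A].
Proof.
apply/setP => E; apply/idP/idP => [|/imsetP[[a b]]].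
  rewrite inE => /andP[/imsetP[[x s] + ->]].
  rewrite !inE /= pair_straddle => sS.
  case xA: (x \in A); case xsA: (x * s \in A)%g => // _; apply/imsetP.
    by exists (x, x * s)%g; rewrite ?inE /= ?xA ?xsA /cay_adj ?mulKg ?sS.
  exists (x * s, x)%g; last by rewrite /= setUC.
  by rewrite inE /= xA xsA /cay_adj invMg mulgKV -S_sym inE invgK sS.
rewrite inE /= => /and3P[ab aA bA] ->.
rewrite inE pair_straddle aA bA andbT.
by apply/imsetP; exists (a, a^-1 * b)%g; rewrite ?inE //= mulKVg.
Qed.

Lemma card_cay_boundary A : #|cay_boundary S A| = #|out_arcs A|.
Proof.
rewrite cay_boundaryE card_in_imset // => -[a b] [a' b'].
rewrite !inE /= => /and3P[_ aA bA] /and3P[_ a'A b'A] E.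
have -> : a = a'.
  by move: (set21 a b); rewrite E !inE => /orP[/eqP //|/eqP ab']; rewrite ab' (negbTE b'A) in aA.
have -> // : b = b'.
by move: (set22 a b); rewrite E !inE => /orP[/eqP ba'|/eqP //]; rewrite ba' a'A in bA.
Qed.

End CayleyArcs.

Section Colouring.
Variables (gT : finGroupType) (S : {set gT}).
Hypothesis S_sym : (S^-1)%g = S.
Variables L R : {set gT}.

Definition colour (g : gT) : option bool :=
  if g \in L then Some true else if g \in R then Some false else None.

Lemma colouredE g : (colour g != None) = (g \in L) || (g \in R).
Proof. by rewrite /colour; case: (g \in L); case: (g \in R). Qed.

Definition bip_defect : nat :=
  e_cnt S L L + e_cnt S R R + #|cay_boundary S (L :|: R)|.

Definition defect_arcs : {set gT * gT} := [set p |
  [&& cay_adj S p.1 p.2, colour p.1 != None & colour p.2 != omap negb (colour p.1)]].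

Lemma card_defect_arcs : #|defect_arcs| <= bip_defect.
Proof.
have sub : defect_arcs \subset [set p in setX L L | cay_adj S p.1 p.2] :|:
    [set p in setX R R | cay_adj S p.1 p.2] :|: out_arcs S (L :|: R).
  apply/subsetP => -[a b]; rewrite !inE /colour /=.
  by case: (cay_adj S a b); case: (a \in L); case: (a \in R); case: (b \in L); case: (b \in R).
apply: leq_trans (subset_leq_card sub) _.
rewrite /bip_defect (card_cay_boundary S_sym).
apply: leq_trans (leq_card_setU _ _) _; rewrite leq_add2r.
exact: leq_card_setU.
Qed.

Definition shift_set (e : bool) (x : gT) : {set gT} :=
  [set g | (colour g != None) && (colour g == omap (addb e) (colour (x^-1 * g)%g))].

Lemma shift_set1 : shift_set false 1%g = L :|: R.
Proof.
by apply/setP => g; rewrite !inE invg1 mul1g -colouredE; case: (colour g) => [[]|].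
Qed.

Lemma card_boundary_shift_set e x : #|cay_boundary S (shift_set e x)| <= 2 * bip_defect.
Proof.
pose f (p : gT * gT) := ((x^-1 * p.1)%g, (x^-1 * p.2)%g).
have f_inj : injective f by move=> [a b] [a' b'] [/mulgI -> /mulgI ->].
have sub : out_arcs S (shift_set e x) \subset defect_arcs :|: f @^-1: defect_arcs.
  apply/subsetP => -[g h]; rewrite !inE /= cay_adjM => /and3P[-> gW hW] /=.
  move: gW hW; case: (colour g) => [[]|]; case: (colour h) => [[]|];
  case: (colour (x^-1 * g)%g) => [[]|]; case: (colour (x^-1 * h)%g) => [[]|];
  by case: e.
rewrite (card_cay_boundary S_sym); apply: leq_trans (subset_leq_card sub) _.
apply: leq_trans (leq_card_setU _ _) _.
by rewrite card_preimset // mul2n -addnn leq_add // card_defect_arcs.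
Qed.

Lemma card_shift_setU x :
  2 * #|L :|: R| <= #|shift_set false x| + #|shift_set true x| + #|gT|.
Proof.
pose V := (fun g => x^-1 * g)%g @^-1: (L :|: R).
have cardV : #|V| = #|L :|: R| by rewrite card_preimset //; exact: mulgI.
have sub : (L :|: R) :&: V \subset shift_set false x :|: shift_set true x.
  apply/subsetP => g; rewrite !inE -!colouredE.
  by case: (colour g) => [[]|]; case: (colour (x^-1 * g)%g) => [[]|].
have := cardsUI (L :|: R) V; rewrite cardV addnn -mul2n => <-.
rewrite addnC leq_add ?max_card //.
exact: leq_trans (subset_leq_card sub) (leq_card_setU _ _).
Qed.

Lemma card_shift_setI x : #|shift_set false x| + #|shift_set true x| <= #|gT|.
Proof.
have /eqP disj : shift_set false x :&: shift_set true x == set0.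
  apply/eqP/setP => g; rewrite !inE.
  by case: (colour g) => [[]|]; case: (colour (x^-1 * g)%g) => [[]|].
by rewrite -cardsUI disj cards0 addn0 max_card.
Qed.

Lemma card_shift_setM a b x z :
  #|shift_set a x| + #|shift_set b z| <= #|gT| + #|shift_set (a (+) b) (x * z)%g|.
Proof.
have sub : shift_set a x :&: (fun g => x^-1 * g)%g @^-1: shift_set b z
    \subset shift_set (a (+) b) (x * z)%g.
  apply/subsetP => g; rewrite !inE invMg -mulgA.
  case: (colour g) => [[]|]; case: (colour (x^-1 * g)%g) => [[]|];
  by case: (colour (z^-1 * (x^-1 * g))%g) => [[]|]; case: a; case: b.
rewrite -[#|shift_set b z|](card_preimset _ (mulgI x^-1)%g) -cardsUI.
by rewrite leq_add ?max_card ?subset_leq_card.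
Qed.

Definition mono_set (s : gT) : {set gT} :=
  [set g | (colour g != None) && (colour (g * s)%g == colour g)].

Lemma card_mono_set s : s \in S -> #|mono_set s| <= bip_defect.
Proof.
move=> sS; apply: leq_trans card_defect_arcs.
rewrite -(card_imset _ (fun g h (E : (g, (g * s)%g) = (h, (h * s)%g)) => congr1 fst E)).
apply/subset_leq_card/subsetP => _ /imsetP[g + ->]; rewrite !inE /= /cay_adj mulKg sS /=.
by case: (colour g) => [[]|]; case: (colour (g * s)%g) => [[]|].
Qed.

Section Rigidity.
Hypothesis nonbip : ~ cay_bipartite S.
Variable t : nat.
Hypothesis shift_set_dichotomy :
  forall e x, #|shift_set e x| <= t \/ #|gT| <= #|shift_set e x| + t.
Hypothesis t_lt_third : 3 * t < #|gT|.
Hypothesis coloured_large : 2 * t + #|gT| < 2 * #|L :|: R|.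

Definition shift_parity (x : gT) : bool := #|gT| <= #|shift_set true x| + t.

Lemma shift_set_parity x : #|gT| <= #|shift_set (shift_parity x) x| + t.
Proof.
rewrite /shift_parity; case: (leqP #|gT| (#|shift_set true x| + t)) => // small_true.
have [small_false|//] := shift_set_dichotomy false x.
have [small_true'|] := shift_set_dichotomy true x; last lia.
have := card_shift_setU x; lia.
Qed.

Lemma shift_parity_unique e x : #|gT| <= #|shift_set e x| + t -> e = shift_parity x.
Proof.
move=> large; have := shift_set_parity x; have := card_shift_setI x.
by case: e large; case: (shift_parity x) => // *; exfalso; lia.
Qed.

Lemma shift_parityM x z : shift_parity (x * z)%g = shift_parity x (+) shift_parity z.
Proof.
apply/esym/shift_parity_unique.
have := card_shift_setM (shift_parity x) (shift_parity z) x z.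
have := shift_set_parity x; have := shift_set_parity z.
have := shift_set_dichotomy (shift_parity x (+) shift_parity z) (x * z)%g; lia.
Qed.

Lemma shift_parity1 : shift_parity 1%g = false.
Proof.
apply/esym/shift_parity_unique.
have := shift_set_dichotomy false 1%g; rewrite shift_set1; lia.
Qed.

Lemma shift_parityV x : shift_parity x^-1%g = shift_parity x.
Proof.
have := shift_parityM x x^-1%g; rewrite mulgV shift_parity1.
by case: (shift_parity x); case: (shift_parity x^-1%g).
Qed.

Lemma exists_even_generator : exists2 s, s \in S & shift_parity s = false.
Proof.
have [/exists_inP[s sS /negbTE even_s]|/exists_inPn odd] :=
  boolP [exists s in S, ~~ shift_parity s]; first by exists s.
case: nonbip; exists [set x | shift_parity x] => a b ab; rewrite !inE.
by rewrite -(mulKVg a b) shift_parityM (negbNE (odd _ ab)); case: (shift_parity a).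
Qed.

Definition parity_kernel : {set gT} := [set h | ~~ shift_parity h].

Definition agree (h y : gT) : bool :=
  (colour (h * y)%g != None) && (colour (h * y)%g == colour y).

Definition disagree_count (y : gT) : nat := #|[set h in parity_kernel | ~~ agree h y]|.

Lemma card_disagree h : h \in parity_kernel -> #|[set y | ~~ agree h y]| <= t.
Proof.
rewrite inE => /negbTE even_h.
have agreeE : [set y | agree h y] = (fun y => h * y)%g @^-1: shift_set false h.
  apply/setP => y; rewrite !inE /agree mulKg.
  by case: (colour (h * y)%g) => [[]|]; case: (colour y) => [[]|].
have -> : [set y | ~~ agree h y] = ~: [set y | agree h y] by apply/setP => y; rewrite !inE.
have := shift_set_parity h; rewrite even_h -(cardsC [set y | agree h y]) agreeE.
by rewrite card_preimset ?leq_add2l //; exact: mulgI.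
Qed.

Lemma sum_disagree_count : \sum_y disagree_count y <= #|parity_kernel| * t.
Proof.
rewrite (eq_bigr (fun y => \sum_(h in parity_kernel) (~~ agree h y : nat))); last first.
  move=> y _; rewrite /disagree_count -sum1dep_card big_mkcondr /=.
  by apply: eq_bigr => h _; case: (agree h y).
rewrite exchange_big /= -sum_nat_const; apply: leq_sum => h /card_disagree le_t.
apply: leq_trans le_t; rewrite -sum1dep_card [X in _ <= X]big_mkcond /=.
by apply/eq_leq/eq_bigr => y _; case: (agree h y).
Qed.

Lemma card_parity_kernel_le s g : shift_parity s = false -> g \notin mono_set s ->
  #|parity_kernel| <= disagree_count g + disagree_count (g * s)%g.
Proof.
move=> even_s g_mono.
pose c := (g * s^-1 * g^-1)%g.
have even_c : shift_parity c = false.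
  by rewrite /c !shift_parityM !shift_parityV even_s; case: (shift_parity g).
have sub : parity_kernel \subset [set h in parity_kernel | ~~ agree h g] :|:
    (fun h => h * c)%g @^-1: [set h in parity_kernel | ~~ agree h (g * s)%g].
  apply/subsetP => h; rewrite !inE => even_h; rewrite even_h /=.
  rewrite shift_parityM even_c addbF even_h /= /agree.
  (* if h agreed at g and h c at g s, then g would lie in mono_set s *)
  have -> : (h * c * (g * s))%g = (h * g)%g by rewrite /c !mulgA !mulgVK.
  move: g_mono; rewrite inE /agree.
  case: (colour (h * g)%g) => [[]|]; case: (colour g) => [[]|];
  by case: (colour (g * s)%g) => [[]|].
apply: leq_trans (subset_leq_card sub) _.
apply: leq_trans (leq_card_setU _ _) _.
by rewrite card_preimset //; exact: mulIg.
Qed.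

Lemma card_not_mono_set s : shift_parity s = false -> #|~: mono_set s| <= 2 * t.
Proof.
move=> even_s.
have kernel_gt0 : 0 < #|parity_kernel|.
  by apply/card_gt0P; exists 1%g; rewrite inE shift_parity1.
rewrite -(leq_pmul2r kernel_gt0) -mulnA [t * _]mulnC.
apply: leq_trans
  (_ : \sum_(g in ~: mono_set s) (disagree_count g + disagree_count (g * s)%g) <= _).
  by rewrite -sum_nat_const; apply: leq_sum => g; rewrite inE; exact: card_parity_kernel_le.
apply: leq_trans (_ : \sum_g (disagree_count g + disagree_count (g * s)%g) <= _).
  by rewrite [X in X <= _]big_mkcond /=; apply: leq_sum => g _; case: (g \in _).
have shift_sum : \sum_g disagree_count (g * s)%g = \sum_g disagree_count g.
  by rewrite [RHS](reindex_inj (mulIg s)).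
by rewrite big_split /= shift_sum addnn -mul2n leq_mul2l sum_disagree_count orbT.
Qed.

Lemma bip_defect_large : #|gT| <= bip_defect + 2 * t.
Proof.
have [s sS even_s] := exists_even_generator.
by rewrite -(cardsC (mono_set s)) leq_add ?card_mono_set ?card_not_mono_set.
Qed.

End Rigidity.

End Colouring.

Section Cuts.
Variables (gT : finGroupType) (S : {set gT}).
Hypothesis S_sym : (S^-1)%g = S.

Lemma smaller_side A : exists B : {set gT},
  [/\ cay_boundary S B = cay_boundary S A, 2 * #|B| <= #|gT| & #|B| = minn #|A| #|~: A|].
Proof.
have [le_AC|lt_CA] := leqP #|A| #|~: A|; [exists A | exists (~: A)];
  by rewrite ?cay_boundaryC -(cardsC A); split => //; lia.
Qed.

Variables L R : {set gT}.
Hypothesis nonbip : ~ cay_bipartite S.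
Hypothesis defect_small : 16 * bip_defect S L R < #|L :|: R|.

Lemma exists_balanced_cut : exists2 A : {set gT},
  #|L :|: R| <= 50 * minn #|A| #|~: A| & #|cay_boundary S A| <= 2 * bip_defect S L R.
Proof.
have bnd_U : #|cay_boundary S (L :|: R)| <= bip_defect S L R by rewrite leq_addl.
have [few_uncoloured|many_uncoloured] := leqP #|L :|: R| (50 * #|~: (L :|: R)|).
  by exists (L :|: R); lia.
pose t := #|L :|: R| %/ 50.
have [/existsP[x /existsP[e /andP[lo hi]]]|/existsPn dich] :=
  boolP [exists x, exists e, (t < #|shift_set L R e x|) && (#|shift_set L R e x| + t < #|gT|)].
  exists (shift_set L R e x); last exact: card_boundary_shift_set.
  by rewrite -(cardsC (shift_set L R e x)) /t in hi *; lia.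
have dichotomy e x : #|shift_set L R e x| <= t \/ #|gT| <= #|shift_set L R e x| + t.
  by have /existsPn/(_ e) := dich x; rewrite negb_and -!leqNgt => /orP.
exfalso; suff: #|gT| <= bip_defect S L R + 2 * t by rewrite -(cardsC (L :|: R)) /t; lia.
apply: (bip_defect_large S_sym nonbip dichotomy); rewrite -(cardsC (L :|: R)) /t; lia.
Qed.

Lemma exists_sparse_cut : exists2 A : {set gT},
  cheeger_adm A & #|cay_boundary S A| * #|L :|: R| <= 100 * bip_defect S L R * #|A|.
Proof.
have [A0 large sparse] := exists_balanced_cut.
have [A [bndA halfA cardA]] := smaller_side A0.
exists A; first by rewrite /cheeger_adm cardsT halfA andbT cardA; lia.
rewrite bndA cardA; nia.
Qed.

End Cuts.

Lemma bigmin_attained disp (T : orderType disp) (I : finType) (P : pred I)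
    (F : I -> T) i0 :
  P i0 -> exists2 i, P i & \big[Order.min/F i0]_(j | P j) F j = F i.
Proof.
move=> P_i0; apply: (big_ind (fun v => exists2 i, P i & v = F i)).
- by exists i0.
- by move=> _ _ [i Pi ->] [j Pj ->]; rewrite minEle; case: ifP => _; [exists i | exists j].
- by move=> i Pi; exists i.
Qed.

Local Open Scope ring_scope.

Section CheegerBip.
Variables (R : realFieldType) (gT : finGroupType) (S : {set gT}).

Lemma bip_beta_attained : exists2 LR, bip_adm LR & bip_beta S R = bip_ratio S R LR.
Proof.
rewrite /bip_beta; case: pickP => [LR0|none]; first exact: bigmin_attained.
have := none ([set 1%g], set0); rewrite /bip_adm /= setU0 -card_gt0 cards1 andbT.
by rewrite -setI_eq0 setI0 eqxx.
Qed.

Lemma cheeger_h_le_ratio A : cheeger_adm A -> cheeger_h S R <= cheeger_ratio S R A.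
Proof.
rewrite /cheeger_h => adm_A; case: pickP => [A0 _|/(_ A)]; last by rewrite adm_A.
exact: bigmin_le_cond.
Qed.

End CheegerBip.

Lemma ratio_lt_inv_nat (R : realFieldType) (N m d c : nat) : (0 < m)%N ->
  N%:R / (d%:R * m%:R) < 1 / (c%:R * d%:R) :> R -> (c * N < m)%N.
Proof.
move=> m_gt0; have mR : 0 < m%:R :> R by rewrite ltr0n.
have [->|d_gt0] := posnP d; first by rewrite !(mul0r, mulr0, invr0) ltxx.
have [->|c_gt0] := posnP c; first by rewrite mul0n.
have dR : 0 < d%:R :> R by rewrite ltr0n.
have cR : 0 < c%:R :> R by rewrite ltr0n.
rewrite -(ltr_pM2r (_ : 0 < c%:R * d%:R * m%:R :> R)) ?mulr_gt0 //.
have -> : N%:R / (d%:R * m%:R) * (c%:R * d%:R * m%:R) = (c * N)%:R :> R.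
  by rewrite natrM; field; rewrite ?lt0r_neq0.
have -> : 1 / (c%:R * d%:R) * (c%:R * d%:R * m%:R) = m%:R :> R.
  by field; rewrite ?lt0r_neq0.
by rewrite ltr_nat.
Qed.

Lemma ratio_le_nat (R : realFieldType) (a k N m d c : nat) : (0 < m)%N ->
  (a * m <= c * N * k)%N -> a%:R / (d%:R * k%:R) <= c%:R * (N%:R / (d%:R * m%:R)) :> R.
Proof.
move=> m_gt0 le_am; have mR : 0 < m%:R :> R by rewrite ltr0n.
have rhs_ge0 : 0 <= c%:R * (N%:R / (d%:R * m%:R)) :> R.
  by rewrite mulr_ge0 ?divr_ge0 ?mulr_ge0 ?ler0n.
have [->|d_gt0] := posnP d; first by rewrite !mul0r invr0 !mulr0.
have [->|k_gt0] := posnP k; first by rewrite !mulr0 invr0 mulr0.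
have dR : 0 < d%:R :> R by rewrite ltr0n.
have kR : 0 < k%:R :> R by rewrite ltr0n.
rewrite -(ler_pM2r (_ : 0 < d%:R * k%:R * m%:R :> R)) ?mulr_gt0 //.
have -> : a%:R / (d%:R * k%:R) * (d%:R * k%:R * m%:R) = (a * m)%:R :> R.
  by rewrite natrM; field; rewrite ?lt0r_neq0.
have -> : c%:R * (N%:R / (d%:R * m%:R)) * (d%:R * k%:R * m%:R) = (c * N * k)%:R :> R.
  by rewrite !natrM; field; rewrite ?lt0r_neq0.
by rewrite ler_nat.
Qed.

Lemma ler_div_1sub (R : realFieldType) (x b c : R) :
  0 <= x -> 0 <= b -> b < 1 / c -> x <= x / (1 - c * b).
Proof.
move=> x_ge0 b_ge0 b_lt.
have c_gt0 : 0 < c by rewrite -invr_gt0 -div1r (le_lt_trans b_ge0 b_lt).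
have cb_lt1 : c * b < 1 by rewrite mulrC -ltr_pdivlMr.
rewrite ler_pdivlMr ?subr_gt0 //; apply: ler_piMr => //.
by rewrite gerBl mulr_ge0 // ltW.
Qed.

Theorem theorem4 (R : realFieldType) (gT : finGroupType) (S : {set gT}) :
  <<S>>%g = [set: gT] ->
  (S^-1)%g = S ->
  ~ cay_bipartite S ->
  bip_beta S R < 1 / (16 * (#|S|)%:R) ->
  cheeger_h S R <= 100 * bip_beta S R / (1 - 16 * (#|S|)%:R * bip_beta S R).
Proof.
move=> _ S_sym nonbip beta_small.
have [LR /andP[_ LR_nonempty] beta_eq] := bip_beta_attained R S.
have m_gt0 : (0 < #|LR.1 :|: LR.2|)%N by rewrite card_gt0.
rewrite beta_eq in beta_small *.
have [A adm_A sparse_A] := exists_sparse_cut S_sym nonbip (ratio_lt_inv_nat m_gt0 beta_small).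
apply: le_trans (cheeger_h_le_ratio R S adm_A) _.
apply: le_trans (ratio_le_nat R #|S| m_gt0 sparse_A) _.
by apply: ler_div_1sub beta_small; rewrite /bip_ratio ?(mulr_ge0, invr_ge0, ler0n).
Qed.
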